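(* Let $k\ge1$, $n=2k-1$, $T^n=(\mathbb{R}/k\mathbb{Z})^n$, $X_0=\langle\!\langle[0,1]^2\times[0,2]^2\times\cdots\times[0,k-1]^2\times[0,k]\rangle\!\rangle$ and $X_i=X_0+(i,\dots,i)$ for $i\in\mathbb{Z}_k$. Let $I\subseteq\mathbb{Z}_k$ be nonempty, written $I=\{i_0,\dots,i_{\ell-1}\}$ with $0\le i_0<i_1<\cdots<i_{\ell-1}\le k-1$, and set $i_\ell=i_0+k$. For $s\in\{0,\dots,\ell-1\}$ define $C_{I,s}\subset T^n$ as the product, over $t=0,1,\dots,\ell-1$ in order, of the blocks \[B_t=\begin{cases}\{i_t\}\times\prod_{j=i_t+1}^{i_{t+1}-1}[i_t,j]^2\times[i_t,i_{t+1}] & t\neq s,\\[2pt] \prod_{j=i_t+1}^{i_{t+1}-1}[i_t,j]^2\times[i_t,i_{t+1}] & t=s,\end{cases}\] (an empty product contributes no factor). Then \[X_I:=\bigcap_{i\in I}X_i=\bigcup_{s=0}^{\ell-1}\langle\!\langle C_{I,s}\rangle\!\rangle.\] In particular, \[\bigcap_{i\in\mathbb{Z}_k}X_i=\bigcup_{i_*\in\mathbb{Z}_k}\Big\langle\!\Big\langle\{0\}\times\cdots\times\widehat{\{i_*\}}\times\cdots\times\{k-1\}\times\prod_{i=0}^{k-1}[i,i+1]\Big\rangle\!\Big\rangle,\] where the hat indicates that the singleton factor $\{i_*\}$ is omitted (so there are $k-1$ singleton factors followed by $k$ interval factors).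
   Context: For $U\subset T^n$, $\langle\!\langle U\rangle\!\rangle=\{\mathbf{x}_\sigma:\mathbf{x}\in U,\ \sigma\in S_n\}$ with $\mathbf{x}_\sigma=(x_{\sigma(1)},\dots,x_{\sigma(n)})$. $[a,b]^2$ denotes two Cartesian factors equal to $[a,b]$. Products of real intervals and singletons (each block $B_t$ contributes $2(i_{t+1}-i_t)$ or $2(i_{t+1}-i_t)-1$ factors, totaling $n$) are regarded as subsets of $T^n$ via the quotient $\mathbb{R}^n\to(\mathbb{R}/k\mathbb{Z})^n$. $X_0+(i,\dots,i)=\{\mathbf{x}+(i,\dots,i):\mathbf{x}\in X_0\}$. *)

From mathcomp Require Import all_boot all_order all_algebra perm.
From mathcomp Require Import reals.
Set Implicit Arguments. Unset Strict Implicit. Unset Printing Implicit Defensive.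
Import GRing.Theory Num.Theory.
Local Open Scope ring_scope.

(* Subsets of T^n = (R/kZ)^n are represented as predicates on representatives
   x : 'I_n -> R; all predicates below are invariant under kZ^n translations. *)

(* A "factor list" L : seq (nat * nat) describes the product of closed real
   intervals [a_j, b_j] (a singleton {a} is [a,a]), j = 0..n-1, regarded as a
   subset of T^n via the quotient R^n -> (R/kZ)^n:
   x lies in it iff some representative x - k*m (m in Z^n) lies in the box. *)
Definition box (R : realType) (k n : nat) (L : seq (nat * nat))
    (x : 'I_n -> R) : Prop :=
  exists m : 'I_n -> int, forall j : 'I_n,
    ((nth (0%N, 0%N) L j).1)%:R <= x j - k%:R * (m j)%:~R <=
    ((nth (0%N, 0%N) L j).2)%:R.

Definition symc (R : realType) (n : nat) (U : ('I_n -> R) -> Prop)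
    (y : 'I_n -> R) : Prop :=
  exists s : 'S_n, U (fun j => y (s j)).

Definition shiftc (R : realType) (n : nat) (U : ('I_n -> R) -> Prop) (c : R)
    (y : 'I_n -> R) : Prop :=
  U (fun j => y j - c).

Definition X0_list (k : nat) : seq (nat * nat) :=
  flatten [seq [:: (0%N, j); (0%N, j)] | j <- iota 1 k.-1] ++ [:: (0%N, k)].

Definition Xi (R : realType) (k : nat) (i : 'I_k) : ('I_(2 * k - 1) -> R) -> Prop :=
  shiftc (symc (box k (X0_list k))) (val i)%:R.

Definition idxs (k : nat) (I : {set 'I_k}) : seq nat :=
  sort leq [seq val i | i in I].

Definition itI (k : nat) (I : {set 'I_k}) (t : nat) : nat :=
  if (t < #|I|)%N then nth 0%N (idxs I) t else (head 0%N (idxs I) + k)%N.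

Definition blockI (k : nat) (I : {set 'I_k}) (s t : nat) : seq (nat * nat) :=
  let a := itI I t in let b := itI I t.+1 in
  (if t != s then [:: (a, a)] else [::])
  ++ flatten [seq [:: (a, j); (a, j)] | j <- iota a.+1 (b - a).-1]
  ++ [:: (a, b)].

Definition C_list (k : nat) (I : {set 'I_k}) (s : nat) : seq (nat * nat) :=
  flatten [seq blockI I s t | t <- iota 0 #|I|].

Definition full_list (k : nat) (istar : 'I_k) : seq (nat * nat) :=
  [seq (i, i) | i <- iota 0 k & i != val istar]
  ++ [seq (i, i.+1) | i <- iota 0 k].

(* For a box B = [a_0,b_0] x ... x [a_(n-1),b_(n-1)] whose intervals
   are sorted in both endpoints, x lies in <<B>> iff some representative p of x
   modulo kZ^n satisfies the Hall-type conditions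
     #{j | b_j <= v} <= #{c | p_c <= v}   and   #{c | p_c < v} <= #{j | a_j < v}
   for every integer v (sort the coordinates of p against the intervals).
   Reduce all coordinates of x into the window [i_0, i_0 + k) and let F v, G v
   count the coordinates <= v, resp. < v.  Then x lies in X_(i_u) iff
     G (i_u) + 2v + [v < i_u] <= F v + 2 i_u        for all v in the window,
   and x lies in <<C_(I,s)>> iff for some q (the number of coordinates moved
   from i_0 up to i_0 + k)
     G (i_u) + 2 i_0 + [s < u] <= 2 i_u + q   and   2v + [v < i_s] + q <= F v + 2 i_0.
   Adding the last two inequalities gives the first one; conversely, the first
   family yields the last two for s the last index maximising G (i_u) - 2 i_u.
   X_0 itself is C_({0},0), and for I = Z_k the list C_(I,s) is a rearrangement
   of the factors of the second display. *)

From mathcomp Require Import all_boot all_order all_algebra perm.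
From mathcomp Require Import reals.
From mathcomp Require Import zify lra.
Import Order.TTheory GRing.Theory Num.Theory.
Local Open Scope ring_scope.

Set Implicit Arguments.
Unset Strict Implicit.
Unset Printing Implicit Defensive.

Section FinCards.
Variable T : finType.
Implicit Types P Q S : pred T.

Lemma card_set_sub P Q : (forall c, P c -> Q c) ->
  (#|[set c | P c]| <= #|[set c | Q c]|)%N.
Proof.
by move=> PQ; apply: subset_leq_card; apply/subsetP => c; rewrite !inE => /PQ.
Qed.

Lemma card_set_disjU P Q S : (forall c, P c -> ~~ Q c) ->
  (forall c, P c || Q c -> S c) ->
  (#|[set c | P c]| + #|[set c | Q c]| <= #|[set c | S c]|)%N.
Proof.
move=> PnQ PQS; rewrite -cardsUI.
have -> : [set c | P c] :&: [set c | Q c] = set0.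
  by apply/setP => c; rewrite !inE; apply/negP => /andP [/PnQ/negP].
rewrite cards0 addn0; apply: subset_leq_card; apply/subsetP => c.
by rewrite !inE => /PQS.
Qed.

Lemma card_set_cover P Q S : (forall c, S c -> P c || Q c) ->
  (#|[set c | S c]| <= #|[set c | P c]| + #|[set c | Q c]|)%N.
Proof.
move=> SPQ; rewrite -cardsUI; apply: leq_trans (leq_addr _ _).
by apply: subset_leq_card; apply/subsetP => c; rewrite !inE => /SPQ.
Qed.

Lemma card_set_orE P Q S : (forall c, P c -> ~~ Q c) ->
  (forall c, S c = P c || Q c) ->
  #|[set c | S c]| = (#|[set c | P c]| + #|[set c | Q c]|)%N.
Proof.
move=> PnQ SPQ; apply/eqP; rewrite eqn_leq card_set_cover => [|c]; last by rewrite SPQ.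
by rewrite card_set_disjU // => c; rewrite SPQ.
Qed.

Lemma card_set_predC P : (#|[set c | P c]| + #|[set c | ~~ P c]|)%N = #|T|.
Proof.
rewrite -(cardsC [set c | P c]); congr (_ + _)%N.
by apply: eq_card => c; rewrite !inE.
Qed.

Lemma card_set_all P : (forall c, P c) -> #|[set c | P c]| = #|T|.
Proof. by move=> allP; apply: eq_card => c; rewrite inE allP. Qed.

Lemma card_set_none P : (forall c, ~~ P c) -> #|[set c | P c]| = 0%N.
Proof. by move=> noP; apply: eq_card0 => c; rewrite inE (negbTE (noP c)). Qed.

Lemma card_set_le0 P c : (#|[set c | P c]| <= 0)%N -> ~~ P c.
Proof.
move=> le0; apply/negP => Pc.
have : (0 < #|[set c | P c]|)%N by apply/card_gt0P; exists c; rewrite inE.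
lia.
Qed.

Lemma card_set_full P c : (#|T| <= #|[set c | P c]|)%N -> P c.
Proof.
move=> full; apply/negPn/negP => nPc.
have : (0 < #|[set c | ~~ P c]|)%N by apply/card_gt0P; exists c; rewrite inE.
have := card_set_predC P; lia.
Qed.

Lemma subset_of_card (A : {set T}) q : (q <= #|A|)%N ->
  exists2 B : {set T}, B \subset A & #|B| = q.
Proof.
elim: q => [|q IHq] le_qA; first by exists set0; rewrite ?sub0set ?cards0.
have [B sub_BA card_B] := IHq (ltnW le_qA).
have : (0 < #|A :\: B|)%N by rewrite cardsD (setIidPr sub_BA); lia.
case/card_gt0P => a; rewrite inE => /andP [a_nB a_A].
by exists (a |: B); rewrite ?subUset ?sub1set ?a_A // cardsU1 a_nB card_B.
Qed.

End FinCards.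

Lemma count_iota_card n (P : pred nat) :
  count P (iota 0 n) = #|[set i : 'I_n | P i]|.
Proof.
rewrite -val_enum_ord count_map -sum1_count -sum1_card big_enum_cond /=.
by apply: eq_bigl => i; rewrite inE.
Qed.

Lemma count_nth_card (A : Type) (d : A) (L : seq A) n (P : pred A) :
  size L = n -> count P L = #|[set j : 'I_n | P (nth d L j)]|.
Proof.
by move=> <-; rewrite -{1}(mkseq_nth d L) /mkseq count_map count_iota_card.
Qed.

Lemma count_iota_ltn c m v :
  count (fun i => (i < v)%N) (iota c m) = minn m (v - c).
Proof. by elim: m c => [|m IHm] c /=; rewrite ?IHm; case: ltnP; lia. Qed.

Lemma card_ord_ltn n j : (j <= n)%N -> #|[set i : 'I_n | (i < j)%N]| = j.
Proof.
by move=> le_jn; rewrite -(count_iota_card n (fun i => (i < j)%N)) count_iota_ltn; lia.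
Qed.

Definition itv_le (e f : nat * nat) := (e.1 <= f.1)%N && (e.2 <= f.2)%N.

Definition count_hi (L : seq (nat * nat)) (v : nat) :=
  count (fun e : nat * nat => (e.2 <= v)%N) L.

Definition count_lo (L : seq (nat * nat)) (v : nat) :=
  count (fun e : nat * nat => (e.1 < v)%N) L.

Definition congr_mod (R : realType) (k : nat) (y z : R) :=
  exists m : int, y = z - k%:R * m%:~R.

Section PointCounts.
Variables (R : realType) (n : nat).
Implicit Types p : 'I_n -> R.

Definition nb_le p (v : nat) := #|[set c | p c <= v%:R]|.
Definition nb_lt p (v : nat) := #|[set c | p c < v%:R]|.

Lemma sort_perm p : exists t : 'S_n, forall i j : 'I_n, (i <= j)%N -> p (t i) <= p (t j).
Proof.
pose le c d := p c <= p d.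
pose s := sort le (enum 'I_n).
have s_perm : perm_eq s (enum 'I_n) by rewrite perm_sort.
have size_s : size s = n by rewrite (perm_size s_perm) size_enum_ord.
have s_uniq : uniq s by rewrite (perm_uniq s_perm) enum_uniq.
have s_sorted : sorted le s by apply: sort_sorted => c d; exact: le_total.
pose f i := nth i s i.
have f_inj : injective f.
  move=> i j; rewrite /f (set_nth_default i j) ?size_s ?ltn_ord //.
  by move/eqP; rewrite nth_uniq ?size_s ?ltn_ord // => /eqP/val_inj.
exists (perm f_inj) => i j le_ij; rewrite !permE /f.
rewrite [nth i s i](set_nth_default j) ?size_s ?ltn_ord //.
have le_trans' : transitive le by move=> d c e; exact: le_trans.
apply: (sorted_leq_nth le_trans' (fun c => lexx (p c))) => //.
all: by rewrite inE /= size_s.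
Qed.

Variable k : nat.

Lemma symc_box_counts L x : size L = n -> symc (box k L) x ->
  exists p, [/\ forall c, congr_mod k (p c) (x c),
                forall v, (count_hi L v <= nb_le p v)%N &
                forall v, (nb_lt p v <= count_lo L v)%N].
Proof.
move=> size_L [s [m in_box]].
exists (fun c => x c - k%:R * (m (s^-1 c)%g)%:~R); split.
- by move=> c; exists (m (s^-1 c)%g).
- move=> v; rewrite /count_hi (count_nth_card (0%N, 0%N) _ size_L).
  rewrite -(card_imset _ (@perm_inj _ s)); apply: subset_leq_card.
  apply/subsetP => c /imsetP [j]; rewrite !inE => hi_le ->; rewrite permK.
  by case/andP: (in_box j) => _ /le_trans; apply; rewrite ler_nat.
- move=> v; rewrite /count_lo (count_nth_card (0%N, 0%N) _ size_L).
  rewrite /nb_lt -(card_imset _ (@perm_inj _ (s^-1)%g)); apply: subset_leq_card.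
  apply/subsetP => j /imsetP [c]; rewrite !inE => lt_v ->.
  have /andP [+ _] := in_box (s^-1 c)%g; rewrite permKV => /le_lt_trans/(_ lt_v).
  by rewrite ltr_nat.
Qed.

Section SortedCoordinates.
Variables (p : 'I_n -> R) (t : 'S_n) (L : seq (nat * nat)).
Hypothesis t_sorts : forall i j : 'I_n, (i <= j)%N -> p (t i) <= p (t j).
Hypothesis size_L : size L = n.
Hypothesis L_sorted : pairwise itv_le L.

Let nthL (j : nat) := nth (0%N, 0%N) L j.

Let L_mono (i j : nat) : (i <= j)%N -> (j < n)%N -> itv_le (nthL i) (nthL j).
Proof.
rewrite leq_eqVlt => /orP [/eqP -> _ | lt_ij lt_jn]; first by rewrite /itv_le !leqnn.
by apply: (pairwiseP (0%N, 0%N) L_sorted); rewrite ?inE ?size_L // (ltn_trans lt_ij).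
Qed.

Lemma sorted_lo_le : (forall v, nb_lt p v <= count_lo L v)%N ->
  forall j : 'I_n, (nthL j).1%:R <= p (t j).
Proof.
move=> lo_bound j; rewrite leNgt; apply/negP => lt_pj.
set a := (nthL j).1 in lt_pj.
have : (j.+1 <= nb_lt p a)%N.
  rewrite -{1}(@card_ord_ltn n j.+1) // -(card_imset _ (@perm_inj _ t)).
  apply: subset_leq_card.
  apply/subsetP => c /imsetP [i]; rewrite !inE => lt_ij ->.
  by apply: le_lt_trans lt_pj; apply: t_sorts; rewrite -ltnS.
have : (count_lo L a <= j)%N.
  rewrite /count_lo (count_nth_card (0%N, 0%N) _ size_L).
  apply: leq_trans (eq_leq (@card_ord_ltn n j (ltnW (ltn_ord j)))).
  apply: card_set_sub => i; apply: contraTT; rewrite -!leqNgt => le_ji.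
  by have /andP [] := L_mono le_ji (ltn_ord i).
by have := lo_bound a; lia.
Qed.

Lemma sorted_le_hi : (forall v, count_hi L v <= nb_le p v)%N ->
  forall j : 'I_n, p (t j) <= (nthL j).2%:R.
Proof.
move=> hi_bound j; rewrite leNgt; apply/negP => lt_bj.
set b := (nthL j).2 in lt_bj.
have : (nb_le p b <= j)%N.
  apply: leq_trans (eq_leq (@card_ord_ltn n j (ltnW (ltn_ord j)))).
  rewrite -(card_imset [set i : 'I_n | (i < j)%N] (@perm_inj _ t)).
  apply: subset_leq_card; apply/subsetP => c; rewrite inE => le_cb.
  apply/imsetP; exists (t^-1 c)%g; rewrite ?permKV // inE ltnNge.
  apply: contraTN le_cb => /t_sorts; rewrite permKV -ltNge; exact: lt_le_trans.
have : (j.+1 <= count_hi L b)%N.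
  rewrite /count_hi (count_nth_card (0%N, 0%N) _ size_L).
  rewrite -{1}(@card_ord_ltn n j.+1) //; apply: card_set_sub => i lt_ij.
  by have /andP [_] := L_mono (lt_ij : (i <= j)%N) (ltn_ord j).
by have := hi_bound b; lia.
Qed.

End SortedCoordinates.

Lemma counts_symc_box L x p : size L = n -> pairwise itv_le L ->
  (forall c, congr_mod k (p c) (x c)) ->
  (forall v, count_hi L v <= nb_le p v)%N ->
  (forall v, nb_lt p v <= count_lo L v)%N -> symc (box k L) x.
Proof.
move=> size_L L_sorted p_congr hi_bound lo_bound.
have [m def_p] := fin_all_exists p_congr.
have [t t_sorts] := sort_perm p.
exists t, (fun j => m (t j)) => j; rewrite -def_p.
by rewrite (sorted_lo_le t_sorts) ?(sorted_le_hi t_sorts).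
Qed.

End PointCounts.

Section Window.
Variables (R : realType) (k : nat).
Implicit Types y z : R.

Definition win_rep (b y : R) : R := y - k%:R * (Num.floor ((y - b) / k%:R))%:~R.

Lemma congr_win_rep b y : congr_mod k (win_rep b y) y.
Proof. by exists (Num.floor ((y - b) / k%:R)). Qed.

Lemma congr_modD y z (j : int) :
  congr_mod k y z -> congr_mod k (y + k%:R * j%:~R) z.
Proof. by case=> m ->; exists (m - j); rewrite intrB; lra. Qed.

Hypothesis k_gt0 : (0 < k)%N.

Let kR_gt0 : 0 < (k%:R : R). Proof. by rewrite ltr0n. Qed.

Lemma win_rep_bounds b y : b <= win_rep b y < b + k%:R.
Proof.
rewrite /win_rep; set f := Num.floor _.
have /andP [fl_le lt_fl] := floor_itv ((y - b) / k%:R); rewrite -/f in fl_le lt_fl.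
rewrite ler_pdivlMr // in fl_le.
rewrite ltr_pdivrMr // intrD mulrDl mul1r in lt_fl.
apply/andP; split; lra.
Qed.

Lemma congr_window_eq lo y z : congr_mod k y z -> lo <= y < lo + k%:R ->
  y = win_rep lo z.
Proof.
case=> m def_y y_win; have := win_rep_bounds lo z; rewrite /win_rep def_y in y_win *.
set f := Num.floor _ => /andP [lo_le lt_lo] {def_y}; move: y_win => /andP [].
have def_d : ((f - m)%:~R : R) = f%:~R - m%:~R by rewrite intrB.
have [d_le|[-> //|d_ge]] : (f - m <= -1)%R \/ f = m \/ (1 <= f - m)%R by lia.
- have : ((f - m)%:~R : R) <= (-1)%:~R by rewrite ler_int.
  rewrite def_d mulrN1z; nra.
- have : (1%:~R : R) <= (f - m)%:~R by rewrite ler_int.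
  rewrite def_d; nra.
Qed.

Lemma win_rep_top lo z : congr_mod k (lo + k%:R) z -> win_rep lo z = lo.
Proof.
move=> top; have := congr_modD (-1) top; rewrite mulrN1z mulrN1 addrK.
by move=> /congr_window_eq <- //; rewrite lexx ltrDl ltr0n.
Qed.

Lemma win_rep_shift b (i : nat) y : b <= i%:R < b + k%:R ->
  win_rep 0 (y - i%:R) =
    if i%:R <= win_rep b y then win_rep b y - i%:R else win_rep b y - i%:R + k%:R.
Proof.
move=> /andP [b_le lt_i]; have /andP [b_le_w w_lt] := win_rep_bounds b y.
have [e def_w] := congr_win_rep b y.
case: leP => [le_iw | lt_wi]; symmetry; apply: congr_window_eq.
- by exists e; rewrite def_w; lra.
- by apply/andP; split; lra.
- by exists (e - 1); rewrite def_w intrB; lra.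
- by apply/andP; split; lra.
Qed.

End Window.

Definition pair_factors (a : nat) (s : seq nat) : seq (nat * nat) :=
  flatten [seq [:: (a, j); (a, j)] | j <- s].

Definition block (f : bool) (a b : nat) : seq (nat * nat) :=
  (if f then [:: (a, a)] else [::])
  ++ pair_factors a (iota a.+1 (b - a).-1) ++ [:: (a, b)].

Lemma X0_list_block k : X0_list k = block false 0 k.
Proof. by rewrite /X0_list /block subn0. Qed.

Lemma blockI_block k (I : {set 'I_k}) s t :
  blockI I s t = block (t != s) (itI I t) (itI I t.+1).
Proof. by []. Qed.

Lemma count_pair_factors a s (P : pred (nat * nat)) :
  count P (pair_factors a s) = (2 * count (fun j => P (a, j)) s)%N.
Proof. by elim: s => [|j s IHs] //=; rewrite IHs; lia. Qed.

Lemma size_pair_factors a s : size (pair_factors a s) = (2 * size s)%N.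
Proof. by rewrite -!count_predT count_pair_factors. Qed.

Lemma mem_pair_factors a s e : e \in pair_factors a s -> e.1 = a /\ e.2 \in s.
Proof.
elim: s => [|j s IHs] //=; rewrite !inE => /or3P [/eqP -> | /eqP -> | /IHs].
- by rewrite eqxx.
- by rewrite eqxx.
- by case=> -> ->; rewrite orbT.
Qed.

Lemma pairwise_flatten (T : eqType) (r : rel T) (B : nat -> seq T) (s : seq nat) :
  pairwise ltn s -> (forall t, t \in s -> pairwise r (B t)) ->
  (forall t t', t \in s -> t' \in s -> (t < t')%N -> allrel r (B t) (B t')) ->
  pairwise r (flatten [seq B t | t <- s]).
Proof.
elim: s => [|t s IHs] //= /andP [t_lt s_ltn] B_pw B_rel.
have in_ts : {subset s <= t :: s} by move=> y y_in; rewrite inE y_in orbT.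
rewrite pairwise_cat; apply/and3P; split.
- apply/allrelP => x y x_in /flatten_mapP [t' t'_in y_in].
  have /allrelP := B_rel t t' (mem_head _ _) (in_ts _ t'_in) (allP t_lt _ t'_in).
  exact.
- exact/B_pw/mem_head.
- apply: IHs => [// | t' t'_in | t1 t2 t1_in t2_in]; first exact: B_pw (in_ts _ t'_in).
  exact: B_rel (in_ts _ t1_in) (in_ts _ t2_in).
Qed.

Lemma pairwise_iota c m : pairwise ltn (iota c m).
Proof. by rewrite -sorted_pairwise ?iota_ltn_sorted //; exact: ltn_trans. Qed.

Lemma pairwise_pair_factors a c m : pairwise itv_le (pair_factors a (iota c m)).
Proof.
apply: pairwise_flatten => [|t _ | t t' _ _ lt_tt']; first exact: pairwise_iota.
  by rewrite /= /itv_le /= !leqnn.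
by rewrite /allrel /= /itv_le /= leqnn ltnW.
Qed.

Section Block.
Variables (f : bool) (a b : nat).
Hypothesis lt_ab : (a < b)%N.

Lemma size_block : size (block f a b) = (f + 2 * (b - a) - 1)%N.
Proof.
rewrite /block !size_cat size_pair_factors size_iota.
case: f => /=; lia.
Qed.

Lemma mem_block e : e \in block f a b -> e.1 = a /\ (a <= e.2 <= b)%N.
Proof.
rewrite /block !mem_cat => /or3P [| /mem_pair_factors [-> ] | ].
- by case: f => //=; rewrite inE => /eqP -> /=; rewrite leqnn ltnW.
- by rewrite mem_iota => /andP [le_a lt_b]; split => //; lia.
- by rewrite inE => /eqP -> /=; rewrite leqnn ltnW.
Qed.

Lemma count_hi_block v : count_hi (block f a b) v =
  ((f && (a <= v)) + 2 * minn (b - a).-1 (v - a) + (b <= v))%N.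
Proof.
rewrite /count_hi /block !count_cat count_pair_factors /=.
have -> : count (fun j => (j <= v)%N) (iota a.+1 (b - a).-1) =
          minn (b - a).-1 (v - a).
  exact: (count_iota_ltn a.+1 _ v.+1).
case: f => /=; lia.
Qed.

Lemma count_lo_block v :
  count_lo (block f a b) v = if (a < v)%N then size (block f a b) else 0%N.
Proof.
rewrite /count_lo -count_predT -(count_pred0 (block f a b)).
by case: ifP => lt_av; apply: eq_in_count => e /mem_block [-> _]; rewrite lt_av.
Qed.

Lemma pairwise_block : pairwise itv_le (block f a b).
Proof.
rewrite /block !pairwise_cat pairwise_pair_factors /=; apply/and4P; split => //.
- case: f => //=; apply/allrelP => e e'; rewrite inE => /eqP ->.
  rewrite mem_cat => /orP [/mem_pair_factors [e1] | ].
  + by rewrite mem_iota /itv_le /= e1 leqnn => /andP [/ltnW].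
  + by rewrite inE => /eqP -> ; rewrite /itv_le /= leqnn ltnW.
- by case: f.
- apply/allrelP => e e' /mem_pair_factors [e1]; rewrite mem_iota inE.
  move=> /andP [_ e2_lt] /eqP ->; rewrite /itv_le /= e1 leqnn /=.
  by move: (e.2) e2_lt => y; lia.
Qed.

End Block.

Lemma locate_step (f : nat -> nat) L v : (f 0 <= v < f L)%N ->
  exists2 T, (T < L)%N & (f T <= v < f T.+1)%N.
Proof.
elim: L => [|L IHL] v_in; first by lia.
have [lt_v | le_v] := ltnP v (f L); last by exists L => //; lia.
by have [T lt_T T_v] := IHL ltac:(lia); exists T => //; lia.
Qed.

Section Indices.
Variables (k : nat) (I : {set 'I_k}).
Local Notation i := (itI I).
Local Notation l := #|I|.

Lemma size_idxs : size (idxs I) = l.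
Proof. by rewrite /idxs size_sort /image_mem size_map -cardE. Qed.

Lemma sorted_idxs : sorted ltn (idxs I).
Proof.
rewrite ltn_sorted_uniq_leq sort_uniq sort_sorted ?andbT; last exact: leq_total.
by rewrite /image_mem map_inj_uniq ?enum_uniq //; exact: val_inj.
Qed.

Lemma mem_idxs x : (x \in idxs I) = [exists j in I, val j == x].
Proof.
rewrite /idxs mem_sort; apply/imageP/existsP => [[j j_in ->] | [j /andP [j_in /eqP <-]]].
  by exists j; rewrite j_in eqxx.
by exists j.
Qed.

Lemma itI_ltk t : (t < l)%N -> (i t < k)%N.
Proof.
move=> lt_t; rewrite /itI lt_t.
have : nth 0%N (idxs I) t \in idxs I by rewrite mem_nth ?size_idxs.
by rewrite mem_idxs => /existsP [j /andP [_ /eqP <-]]; exact: ltn_ord.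
Qed.

Lemma itI_mem t (lt_t : (t < l)%N) : Ordinal (itI_ltk lt_t) \in I.
Proof.
have : nth 0%N (idxs I) t \in idxs I by rewrite mem_nth ?size_idxs.
rewrite mem_idxs => /existsP [j /andP [j_in /eqP def_j]].
by rewrite (_ : Ordinal _ = j) //; apply: val_inj; rewrite /= /itI lt_t def_j.
Qed.

Lemma itI_surj (j : 'I_k) : j \in I -> exists2 t, (t < l)%N & i t = val j.
Proof.
move=> j_in; have j_idx : val j \in idxs I.
  by rewrite mem_idxs; apply/existsP; exists j; rewrite j_in /=.
exists (index (val j) (idxs I)); first by rewrite -size_idxs index_mem.
by rewrite /itI -size_idxs index_mem j_idx nth_index.
Qed.

Hypothesis I_neq0 : I != set0.

Lemma itI_card : i l = (i 0 + k)%N.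
Proof. by rewrite /itI ltnn card_gt0 I_neq0 nth0. Qed.

Lemma itI_ltn t t' : (t < t')%N -> (t' <= l)%N -> (i t < i t')%N.
Proof.
move=> lt_tt'; rewrite leq_eqVlt => /orP [/eqP eq_t' | lt_t'].
  by rewrite eq_t' itI_card in lt_tt' *; have := itI_ltk lt_tt'; lia.
rewrite /itI lt_t' (ltn_trans lt_tt' lt_t').
apply: (sorted_ltn_nth ltn_trans 0%N sorted_idxs) => //.
  by rewrite inE size_idxs (ltn_trans lt_tt').
by rewrite inE size_idxs.
Qed.

Lemma itI_leq t t' : (t <= t')%N -> (t' <= l)%N -> (i t <= i t')%N.
Proof.
by rewrite leq_eqVlt => /orP [/eqP -> // | lt_tt'] le_t'; apply/ltnW/itI_ltn.
Qed.

Lemma itI_window t : (t < l)%N -> (i 0 <= i t < i 0 + k)%N.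
Proof.
by move=> lt_t; have := itI_leq (leq0n t) (ltnW lt_t); have := itI_ltk lt_t; lia.
Qed.

Lemma itI_locate v : (i 0 <= v < i 0 + k)%N ->
  exists2 T, (T < l)%N & (i T <= v < i T.+1)%N.
Proof. by rewrite -itI_card; exact: locate_step. Qed.

End Indices.

Lemma itI_set1 k (j : 'I_k) t : (t <= 1)%N -> itI [set j] t = (val j + t * k)%N.
Proof.
have idxs1 : idxs [set j] = [:: val j] by rewrite /idxs /image_mem enum_set1.
by rewrite /itI cards1 idxs1; case: t => [|[|]] //= _; rewrite ?addn0 ?mul1n.
Qed.

Lemma sum_nat_split3 (F : nat -> nat) T L : (T < L)%N ->
  (\sum_(0 <= t < L) F t = \sum_(0 <= t < T) F t + F T + \sum_(T.+1 <= t < L) F t)%N.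
Proof.
move=> lt_T; rewrite (@big_cat_nat _ _ _ T) //= 1?ltnW //.
by rewrite (@big_ltn _ _ _ T) // addnA.
Qed.

Section CList.
Variables (k : nat) (I : {set 'I_k}) (s : nat).
Hypothesis I_neq0 : I != set0.
Hypothesis lt_s : (s < #|I|)%N.
Local Notation i := (itI I).
Local Notation l := #|I|.
Local Notation C := (C_list I s).

Let i_step t : (t < l)%N -> (i t < i t.+1)%N.
Proof. by move=> lt_t; apply: itI_ltn. Qed.

Definition block_size t := ((t != s) + 2 * (i t.+1 - i t) - 1)%N.

Lemma size_blockI t : (t < l)%N -> size (blockI I s t) = block_size t.
Proof. by move=> lt_t; rewrite blockI_block size_block ?i_step. Qed.

Lemma sum_block_size T : (T <= l)%N ->
  (\sum_(0 <= t < T) block_size t + (s < T))%N = (2 * (i T - i 0))%N.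
Proof.
elim: T => [|T IHT] le_T; first by rewrite big_geq //; lia.
rewrite big_nat_recr //=; have := IHT (ltnW le_T); have := i_step le_T.
have := itI_leq I_neq0 (leq0n T) (ltnW le_T); rewrite /block_size; lia.
Qed.

Lemma count_C (Q : pred (nat * nat)) :
  count Q C = (\sum_(0 <= t < l) count Q (blockI I s t))%N.
Proof. by rewrite /C_list count_flatten -map_comp sumnE big_map /index_iota subn0. Qed.

Lemma size_C : size C = (2 * k - 1)%N.
Proof.
rewrite -count_predT count_C (@eq_big_nat _ _ _ 0 l _ block_size); last first.
  by move=> t /andP [_ lt_t]; rewrite count_predT size_blockI.
by have := sum_block_size (leqnn l); rewrite itI_card //; lia.
Qed.

Lemma mem_C e : e \in C -> (i 0 <= e.1 <= e.2)%N /\ (e.1 < i 0 + k)%N /\ (e.2 <= i 0 + k)%N.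
Proof.
rewrite /C_list => /flatten_mapP [t]; rewrite mem_iota leq0n add0n /= => lt_t.
rewrite blockI_block => /(mem_block (i_step lt_t)) [-> /andP [le_e2 e2_le]].
have := itI_window I_neq0 lt_t; have := itI_leq I_neq0 lt_t (leqnn l); rewrite itI_card //.
by move: (e.2) le_e2 e2_le => y; lia.
Qed.

Lemma pairwise_C : pairwise itv_le C.
Proof.
apply: pairwise_flatten => [|t | t t']; first exact: pairwise_iota.
  by rewrite mem_iota leq0n add0n /= => lt_t; rewrite blockI_block pairwise_block ?i_step.
rewrite !mem_iota !leq0n !add0n /= => lt_t lt_t' lt_tt'; apply/allrelP => e e'.
rewrite !blockI_block => /(mem_block (i_step lt_t)) [e1 /andP [_ e2_le]].
move=> /(mem_block (i_step lt_t')) [e1' /andP [le_e2' _]].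
have := itI_leq I_neq0 (lt_tt' : t.+1 <= t')%N (ltnW lt_t').
have := i_step lt_t; rewrite /itv_le e1 e1'.
by move: (e.2) (e'.2) e2_le le_e2' => y y'; lia.
Qed.

Let count_hi_blockI t v : (t < l)%N ->
  count (fun e : nat * nat => (e.2 <= v)%N) (blockI I s t) =
  ((t != s) && (i t <= v) + 2 * minn (i t.+1 - i t).-1 (v - i t) + (i t.+1 <= v))%N.
Proof. by move=> lt_t; exact: (count_hi_block _ (i_step lt_t)). Qed.

Let count_lo_blockI t v : (t < l)%N ->
  count (fun e : nat * nat => (e.1 < v)%N) (blockI I s t) =
  if (i t < v)%N then block_size t else 0%N.
Proof.
by move=> lt_t; rewrite -size_blockI //; exact: (count_lo_block _ (i_step lt_t)).
Qed.

Lemma count_hi_C v : (i 0 <= v < i 0 + k)%N ->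
  (count_hi C v + 2 * i 0)%N = (2 * v + (v < i s))%N.
Proof.
case/(itI_locate I_neq0) => T lt_T v_in.
rewrite -[count_hi _ _]/(count _ _) count_C (sum_nat_split3 _ lt_T).
rewrite (@eq_big_nat _ _ _ 0 T _ block_size); last first.
  move=> t /andP [_ lt_tT]; have lt_t := ltn_trans lt_tT lt_T.
  rewrite count_hi_blockI //; have := i_step lt_t.
  have := itI_leq I_neq0 (lt_tT : t.+1 <= T)%N (ltnW lt_T).
  by rewrite /block_size; case: eqP => _ /=; lia.
rewrite (@eq_big_nat _ _ _ T.+1 l _ (fun=> 0%N)); last first.
  move=> t /andP [lt_Tt lt_t]; rewrite count_hi_blockI //; have := i_step lt_t.
  have := itI_leq I_neq0 (lt_Tt : T.+1 <= t)%N (ltnW lt_t).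
  by case: eqP => _ /=; lia.
rewrite big1_eq count_hi_blockI //.
have := sum_block_size (ltnW lt_T); have := i_step lt_T.
have := itI_leq I_neq0 (leq0n T) (ltnW lt_T).
have [lt_Ts | le_sT] := ltnP T s.
- have := itI_leq I_neq0 (lt_Ts : T.+1 <= s)%N (ltnW lt_s).
  by rewrite (ltn_eqF lt_Ts) /=; lia.
- have := itI_leq I_neq0 le_sT (ltnW lt_T).
  by case: eqP => [eq_Ts | ne_Ts] /=; [subst T | ]; lia.
Qed.

Lemma count_lo_C v T : (T < l)%N -> (i T < v <= i T.+1)%N ->
  (count_lo C v + (s < T.+1) + 2 * i 0)%N = (2 * i T.+1)%N.
Proof.
move=> lt_T v_in; rewrite -[count_lo _ _]/(count _ _) count_C.
rewrite (@big_cat_nat _ _ _ T.+1) //=.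
rewrite (@eq_big_nat _ _ _ T.+1 l _ (fun=> 0%N)); last first.
  move=> t /andP [lt_Tt lt_t]; rewrite count_lo_blockI //.
  by have := itI_leq I_neq0 lt_Tt (ltnW lt_t); case: ifP => //; lia.
rewrite (@eq_big_nat _ _ _ 0 T.+1 _ block_size); last first.
  move=> t /andP [_ le_tT]; rewrite count_lo_blockI; last lia.
  by have := itI_leq I_neq0 (le_tT : t <= T)%N (ltnW lt_T); case: ifP => //; lia.
rewrite big1_eq addn0; have := sum_block_size lt_T.
have := itI_leq I_neq0 (leq0n T.+1) lt_T; lia.
Qed.

Lemma count_hi_C_lt v : (v < i 0)%N -> count_hi C v = 0%N.
Proof.
move=> lt_v; rewrite -(count_pred0 C); apply: eq_in_count => e /mem_C.
by move: (e.1) (e.2) => a b /= ?; apply/negbTE; lia.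
Qed.

Lemma count_hi_C_ge v : (i 0 + k <= v)%N -> count_hi C v = (2 * k - 1)%N.
Proof.
move=> le_v; rewrite -size_C -count_predT; apply: eq_in_count => e /mem_C.
by move: (e.1) (e.2) => a b /= ?; lia.
Qed.

Lemma count_lo_C_le v : (v <= i 0)%N -> count_lo C v = 0%N.
Proof.
move=> le_v; rewrite -(count_pred0 C); apply: eq_in_count => e /mem_C.
by move: (e.1) (e.2) => a b /= ?; apply/negbTE; lia.
Qed.

Lemma count_lo_C_ge v : (i 0 + k <= v)%N -> count_lo C v = (2 * k - 1)%N.
Proof.
move=> le_v; rewrite -size_C -count_predT; apply: eq_in_count => e /mem_C.
by move: (e.1) (e.2) => a b /= ?; lia.
Qed.

End CList.

Section ClosedWindow.
Variables (R : realType) (k n : nat).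
Hypothesis k_gt0 : (0 < k)%N.
Variables (lo : nat) (x : 'I_n -> R).
Local Notation r := (fun c => win_rep k lo%:R (x c)).

Lemma nb_lt_win_rep_lo : nb_lt r lo = 0%N.
Proof.
apply: card_set_none => c; rewrite -leNgt.
by have /andP [] := win_rep_bounds k_gt0 lo%:R (x c).
Qed.

Lemma win_rep_counts_of_closed_rep p :
  (forall c, congr_mod k (p c) (x c)) -> (forall c, lo%:R <= p c <= (lo + k)%:R) ->
  let q := #|[set c | (lo + k)%:R <= p c]| in
  (forall v, (lo <= v < lo + k)%N -> nb_le p v + q <= nb_le r v)%N /\
  (forall w, nb_lt r w <= nb_lt p w + q)%N.
Proof.
move=> p_congr p_win q.
have p_low c : p c < (lo + k)%:R -> p c = r c.
  move=> lt_p; apply: congr_window_eq => //; have /andP [le_p _] := p_win c.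
  by rewrite -natrD in lt_p *; rewrite le_p.
have p_top c : (lo + k)%:R <= p c -> r c = lo%:R.
  move=> le_p; have /andP [_ p_le] := p_win c; apply: win_rep_top => //.
  by rewrite -natrD (_ : (lo + k)%:R = p c) //; apply/le_anti; rewrite le_p p_le.
split => [v v_in | w].
- apply: card_set_disjU => c.
    by move=> le_pv; rewrite -ltNge (le_lt_trans le_pv) // ltr_nat; lia.
  case/orP => [le_pv | /p_top ->]; last by rewrite ler_nat; lia.
  by rewrite -p_low // (le_lt_trans le_pv) // ltr_nat; lia.
- apply: card_set_cover => c lt_r; case: (ltP (p c) (lo + k)%:R) => [/p_low e | _].
    by rewrite e lt_r.
  by rewrite orbT.
Qed.

Lemma closed_rep_of_win_rep_counts (q : nat) : (q <= nb_le r lo)%N ->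
  exists p, [/\ forall c, congr_mod k (p c) (x c),
    forall c, lo%:R <= p c <= (lo + k)%:R,
    forall v, (nb_le r v <= nb_le p v + q)%N &
    forall w, (lo < w <= lo + k)%N -> (nb_lt p w + q <= nb_lt r w)%N].
Proof.
move=> le_q; have [B B_sub card_B] := subset_of_card le_q.
have B_lo c : c \in B -> r c = lo%:R.
  move=> /(subsetP B_sub); rewrite inE => le_r; apply/le_anti; rewrite le_r.
  by have /andP [] := win_rep_bounds k_gt0 lo%:R (x c).
have r_win c : lo%:R <= r c < lo%:R + k%:R by exact: win_rep_bounds.
pose p c := if c \in B then r c + k%:R * 1%:~R else r c.
exists p; split.
- by move=> c; rewrite /p; case: ifP => _; [apply: congr_modD |]; exact: congr_win_rep.
- move=> c; rewrite /p natrD; case: ifP => [/B_lo -> | _]; rewrite ?mulr1.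
    by rewrite lerDl ler0n lexx.
  by have /andP [le_r lt_r] := r_win c; rewrite le_r ltW.
- move=> v; rewrite -card_B -(cardsE (mem B)).
  by apply: card_set_cover => c le_r; rewrite /p; case: (c \in B); rewrite ?le_r ?orbT.
- move=> w w_in; rewrite -card_B -(cardsE (mem B)); apply: card_set_disjU => c.
    rewrite /p; case: ifP => [/B_lo -> | //]; rewrite mulr1 -natrD ltr_nat /=; lia.
  rewrite /p; case/orP => [| B_c]; first by case: ifP => _ //; have := r_win c; lra.
  by rewrite (B_lo c B_c) ltr_nat; lia.
Qed.

End ClosedWindow.

Lemma nb_lt_mono (R : realType) n (p : 'I_n -> R) v w :
  (v <= w)%N -> (nb_lt p v <= nb_lt p w)%N.
Proof. by move=> le_vw; apply: card_set_sub => c /lt_le_trans; apply; rewrite ler_nat. Qed.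

Section CCriterion.
Variables (R : realType) (k : nat) (I : {set 'I_k}) (s : nat).
Hypothesis I_neq0 : I != set0.
Hypothesis lt_s : (s < #|I|)%N.
Variable x : 'I_(2 * k - 1) -> R.
Local Notation n := (2 * k - 1)%N.
Local Notation i := (itI I).
Local Notation l := #|I|.
Local Notation C := (C_list I s).
Local Notation F := (nb_le (fun c => win_rep k (i 0)%:R (x c))).
Local Notation G := (nb_lt (fun c => win_rep k (i 0)%:R (x c))).

Let k_gt0 : (0 < k)%N.
Proof. by have := itI_ltk lt_s; lia. Qed.

Definition C_bounds (q : nat) :=
  (forall u, (u < l)%N -> G (i u) + 2 * i 0 + (s < u) <= 2 * i u + q)%N /\
  (forall v, (i 0 <= v < i 0 + k)%N -> 2 * v + (v < i s) + q <= F v + 2 * i 0)%N.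

Lemma symc_C_bounds : symc (box k C) x -> exists q, C_bounds q.
Proof.
move=> /(symc_box_counts (size_C I_neq0 lt_s)) [p [p_congr hi lo]].
have p_win c : (i 0)%:R <= p c <= (i 0 + k)%:R.
  apply/andP; split.
    rewrite leNgt; apply: (@card_set_le0 _ (fun c => p c < (i 0)%:R)).
    by have := lo (i 0); rewrite count_lo_C_le.
  apply: (@card_set_full _ (fun c => p c <= (i 0 + k)%:R)).
  by have := hi (i 0 + k)%N; rewrite count_hi_C_ge // card_ord.
have [F_ge G_le] := win_rep_counts_of_closed_rep k_gt0 p_congr p_win.
exists #|[set c | (i 0 + k)%:R <= p c]|; split => [u lt_u | v v_in].
- case: u lt_u => [_ | u lt_u].
    by rewrite nb_lt_win_rep_lo //; lia.
  have u_step : (i u < i u.+1 <= i u.+1)%N.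
    by rewrite leqnn (itI_ltn I_neq0 (ltnSn u) (ltnW lt_u)).
  have := count_lo_C I_neq0 lt_s (ltnW lt_u) u_step.
  have := lo (i u.+1); have := G_le (i u.+1).
  by have := itI_leq I_neq0 (leq0n u.+1) (ltnW lt_u); lia.
- have := count_hi_C I_neq0 lt_s v_in; have := hi v; have := F_ge v v_in; lia.
Qed.

Lemma C_bounds_symc q : C_bounds q -> symc (box k C) x.
Proof.
case=> [G_bound F_bound].
have le_q : (q <= F (i 0))%N by have := F_bound (i 0); lia.
have [p [p_congr p_win F_le G_ge]] := closed_rep_of_win_rep_counts k_gt0 le_q.
apply: (counts_symc_box (size_C I_neq0 lt_s) (pairwise_C I_neq0 lt_s) p_congr) => v.
- have [lt_v | le_v] := ltnP v (i 0); first by rewrite count_hi_C_lt.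
  have [lt_v' | le_v'] := ltnP v (i 0 + k).
    have v_in : (i 0 <= v < i 0 + k)%N by rewrite le_v lt_v'.
    have := count_hi_C I_neq0 lt_s v_in; have := F_bound v v_in; have := F_le v; lia.
  rewrite count_hi_C_ge // /nb_le card_set_all ?card_ord // => c.
  by have /andP [_ /le_trans] := p_win c; apply; rewrite ler_nat.
- have [le_v | lt_v] := leqP v (i 0).
    rewrite /nb_lt card_set_none // => c; rewrite -leNgt.
    by have /andP [+ _] := p_win c; apply: le_trans; rewrite ler_nat.
  have [le_v' | lt_v'] := leqP (i 0 + k) v.
    by rewrite count_lo_C_ge // -{2}(card_ord n) max_card.
  (* On (i_T, i_(T+1)] the starts count is constant, so the bound at v follows
     from the one at i_(T+1), i.e. from the G-inequality for u = T+1. *)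
  have v1_in : (i 0 <= v.-1 < i 0 + k)%N by lia.
  have [T lt_T T_v] := itI_locate I_neq0 v1_in.
  have v_in : (i T < v <= i T.+1)%N by lia.
  have := count_lo_C I_neq0 lt_s lt_T v_in; have [lt_T1 | ] := ltnP T.+1 l.
    have := G_bound _ lt_T1; have := G_ge (i T.+1) (_ : i 0 < i T.+1 <= i 0 + k)%N.
    have := nb_lt_mono p (_ : v <= i T.+1)%N.
    by have := itI_leq I_neq0 (leq0n T.+1) (ltnW lt_T1); have := itI_ltk lt_T1; lia.
  move=> le_lT; have -> : T.+1 = l by lia.
  rewrite itI_card // lt_s.
  have : (nb_lt p v <= n)%N by rewrite -{2}(card_ord n) max_card.
  lia.
Qed.

Lemma symc_C_boundsP : symc (box k C) x <-> exists q, C_bounds q.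
Proof. by split=> [/symc_C_bounds | [q /C_bounds_symc]]. Qed.

End CCriterion.

Lemma X0_counts (R : realType) k (k_gt0 : (0 < k)%N) (y : 'I_(2 * k - 1) -> R) :
  symc (box k (X0_list k)) y <->
  (forall w, (w < k)%N -> 2 * w <= nb_le (fun c => win_rep k 0 (y c)) w)%N.
Proof.
pose j := Ordinal k_gt0.
have j_neq0 : [set j] != set0 by apply/set0Pn; exists j; rewrite set11.
have lt_0 : (0 < #|[set j]|)%N by rewrite cards1.
have itI0 : itI [set j] 0 = 0%N by rewrite itI_set1.
have -> : X0_list k = C_list [set j] 0.
  by rewrite /C_list cards1 /= cats0 blockI_block !itI_set1 //= X0_list_block mul1n.
rewrite symc_C_boundsP // /C_bounds cards1.
have -> : (itI [set j] 0)%:R = 0 :> R by rewrite itI0.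
rewrite itI0; split.
- by case=> q [_ F_bound] w lt_w; have := F_bound w; rewrite lt_w => /(_ isT); lia.
- move=> F_bound; exists 0%N; split => [u | v v_lt]; last by have := F_bound v; lia.
  by rewrite ltnS leqn0 => /eqP ->; rewrite itI0 -{1}[0]/((0%N)%:R) nb_lt_win_rep_lo.
Qed.

Section ShiftedX0.
Variables (R : realType) (k : nat).
Hypothesis k_gt0 : (0 < k)%N.
Local Notation n := (2 * k - 1)%N.
Variables (x : 'I_n -> R) (b i : nat).
Hypothesis i_in : (b <= i < b + k)%N.
Local Notation r := (fun c => win_rep k b%:R (x c)).
Local Notation F := (nb_le r).
Local Notation G := (nb_lt r).

Lemma nb_le_win_rep_shift w : (w < k)%N ->
  (nb_le (fun c => win_rep k 0 (x c - i%:R)) w + G i =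
   if (i + w < b + k)%N then F (i + w) else n + F (i + w - k))%N.
Proof.
move=> lt_w; have i_inR : (b%:R : R) <= i%:R < b%:R + (k%:R : R).
  by rewrite -natrD ler_nat ltr_nat.
have r_win c := win_rep_bounds k_gt0 b%:R (x c).
have shift_le c : (win_rep k 0 (x c - i%:R) <= w%:R) =
    if i%:R <= r c then r c <= (i + w)%:R else r c <= (i + w)%:R - k%:R.
  by rewrite (win_rep_shift k_gt0 _ i_inR) natrD; case: ifP => _; apply/idP/idP => ?; lra.
rewrite /nb_le /nb_lt; case: ifP => lt_iw.
- have lt_b : (i + w)%:R - k%:R < b%:R :> R by rewrite ltrBlDr -!natrD ltr_nat.
  have le_iw : i%:R <= (i + w)%:R :> R by rewrite ler_nat leq_addr.
  symmetry; apply: card_set_orE => c; rewrite shift_le;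
    have /andP [? ?] := r_win c; case: (lerP i%:R (r c)) => //= ?.
  - by move=> ?; exfalso; lra.
  - by rewrite orbF.
  - by rewrite orbT; apply/idP; lra.
- have le_b : b%:R + k%:R <= (i + w)%:R :> R by rewrite -natrD ler_nat; lia.
  have lt_i : (i + w)%:R - k%:R < i%:R :> R by rewrite ltrBlDr -natrD ltr_nat; lia.
  have := card_set_predC (fun c => r c < i%:R); rewrite card_ord.
  suff -> : #|[set c | win_rep k 0 (x c - i%:R) <= w%:R]| =
    (#|[set c | ~~ (r c < i%:R)%R]| + #|[set c | (r c <= (i + w - k)%:R)%R]|)%N by lia.
  apply: card_set_orE => c; rewrite ?shift_le;
    have /andP [? ?] := r_win c; rewrite natrB; try lia.
  - by rewrite -leNgt -ltNge => ?; lra.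
  - by case: (lerP i%:R (r c)) => //= ?; apply/idP; lra.
Qed.

Lemma Xi_counts : shiftc (symc (box k (X0_list k))) i%:R x <->
  (forall v, (b <= v < b + k)%N -> G i + 2 * v + (v < i) <= F v + 2 * i)%N.
Proof.
rewrite /shiftc X0_counts //.
transitivity (forall w, (w < k)%N ->
  2 * w <= nb_le (fun c => win_rep k 0 (x c - i%:R)) w)%N; first exact: iff_refl.
split => [X0_x v v_in | H w lt_w].
- case: (leqP i v) => [le_iv | lt_vi] /=.
    have lt_w : (v - i < k)%N by lia.
    have := X0_x _ lt_w; have := nb_le_win_rep_shift lt_w.
    by rewrite (_ : i + (v - i) < b + k)%N ?subnKC //; lia.
  have lt_w : (v + k - i < k)%N by lia.
  have not_lt : (i + (v + k - i) < b + k)%N = false by apply/negbTE; lia.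
  have -> : v = (i + (v + k - i) - k)%N by lia.
  have := X0_x _ lt_w; have := nb_le_win_rep_shift lt_w; rewrite not_lt; lia.
- have := nb_le_win_rep_shift lt_w; case: ifP => lt_iw.
    have v_in : (b <= i + w < b + k)%N by lia.
    by have := H _ v_in; lia.
  have v_in : (b <= i + w - k < b + k)%N by lia.
  by have := H _ v_in; lia.
Qed.

End ShiftedX0.

Lemma last_argmax (f : nat -> int) L : (0 < L)%N ->
  exists s, [/\ (s < L)%N, forall u, (u < L)%N -> (f u <= f s)%R &
                forall u, (s < u < L)%N -> (f u < f s)%R].
Proof.
elim: L => [|L IHL] // _; have [-> | L_gt0] := posnP L.
  by exists 0%N; split=> // u; [rewrite ltnS leqn0 => /eqP -> | lia].
have [s [lt_sL le_fs lt_fs]] := IHL L_gt0.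
have [le_sL | lt_Ls] := lerP (f s) (f L).
- exists L; split => // [u | u]; last by lia.
  by rewrite ltnS leq_eqVlt => /orP [/eqP -> // | /le_fs /le_trans]; apply.
- exists s; split => [| u | u]; first by lia.
    by rewrite ltnS leq_eqVlt => /orP [/eqP -> | /le_fs //]; exact: ltW.
  case/andP => lt_su; rewrite ltnS leq_eqVlt => /orP [/eqP -> // | lt_uL].
  by apply: lt_fs; rewrite lt_su.
Qed.

Section ArgmaxBounds.
Variables (l : nat) (i g F : nat -> nat) (P : pred nat).
Hypothesis l_gt0 : (0 < l)%N.
Hypothesis i_mono : forall u u', (u <= u' < l)%N -> (i u <= i u')%N.

Lemma bounds_argmax :
  (forall u v, (u < l)%N -> P v -> g u + 2 * v + (v < i u) <= F v + 2 * i u)%N <->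
  exists2 s, (s < l)%N & exists q,
    (forall u, (u < l)%N -> g u + 2 * i 0 + (s < u) <= 2 * i u + q)%N /\
    (forall v, P v -> 2 * v + (v < i s) + q <= F v + 2 * i 0)%N.
Proof.
split=> [H | [s lt_s [q [g_bound F_bound]]] u v lt_u Pv].
- pose E u : int := ((g u)%:Z + (2 * i 0)%:Z - (2 * i u)%:Z)%R.
  have [s [lt_s E_le E_lt]] := last_argmax E l_gt0.
  have E0 := E_le 0%N l_gt0.
  exists s => //; exists (g s + 2 * i 0 - 2 * i s)%N; split => [u lt_u | v Pv].
    have := E_le u lt_u; have := E_lt u; rewrite /E in E0 *; case: ltnP => lt_su /=; lia.
  by have := H s v lt_s Pv; move: E0; rewrite /E; lia.
- have := g_bound u lt_u; have := F_bound v Pv.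
  have [le_us | lt_su] := leqP u s; last by lia.
  by have := i_mono (_ : u <= s < l)%N; rewrite le_us lt_s => /(_ isT); lia.
Qed.

End ArgmaxBounds.

Lemma symc_box_perm (R : realType) k n (L L' : seq (nat * nat)) (x : 'I_n -> R) :
  size L = n -> perm_eq L' L -> symc (box k L) x -> symc (box k L') x.
Proof.
move=> size_L perm_L [sg [m in_box]].
have [J perm_J def_L'] := perm_iotaP (0%N, 0%N) perm_L; rewrite size_L in perm_J.
have size_J : size J = n by rewrite (perm_size perm_J) size_iota.
have J_lt (j : 'I_n) : (nth 0%N J j < n)%N.
  have : nth 0%N J j \in iota 0 n by rewrite -(perm_mem perm_J) mem_nth ?size_J.
  by rewrite mem_iota.
pose f j := Ordinal (J_lt j).
have f_inj : injective f.
  move=> j1 j2 /(congr1 val) /= /eqP; rewrite nth_uniq ?size_J //; last first.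
    by rewrite (perm_uniq perm_J) iota_uniq.
  by move/eqP/val_inj.
exists (perm f_inj * sg)%g, (fun j => m (perm f_inj j)) => j.
by rewrite permM def_L' (nth_map 0%N) ?size_J // permE; exact: (in_box (f j)).
Qed.

Section FullSet.
Variable k : nat.
Hypothesis k_gt0 : (0 < k)%N.

Lemma idxs_setT : idxs [set: 'I_k] = iota 0 k.
Proof.
apply: (sorted_eq leq_trans anti_leq); rewrite ?iota_sorted //.
  by apply: sort_sorted; exact: leq_total.
rewrite perm_sort; apply: uniq_perm; rewrite ?iota_uniq //.
  by rewrite /image_mem map_inj_uniq ?enum_uniq //; exact: val_inj.
move=> y; rewrite mem_iota add0n; apply/imageP/idP => [[j _ ->] | lt_y].
  exact: ltn_ord.
by exists (Ordinal lt_y).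
Qed.

Lemma itI_setT t : (t <= k)%N -> itI [set: 'I_k] t = t.
Proof.
move=> le_t; rewrite /itI cardsT card_ord idxs_setT; case: ltnP => [lt_t | le_kt].
  by rewrite nth_iota.
by case: k k_gt0 le_t le_kt => // k' _ ? ?; rewrite /= add0n; lia.
Qed.

Lemma C_list_setT s : C_list [set: 'I_k] s =
  flatten [seq (if t != s then [:: (t, t)] else [::]) ++ [:: (t, t.+1)] | t <- iota 0 k].
Proof.
rewrite /C_list cardsT card_ord; congr flatten; apply/eq_in_map => t.
rewrite mem_iota add0n => lt_t; rewrite blockI_block /block !itI_setT //; last by lia.
by rewrite subSn // subnn.
Qed.

Lemma perm_C_list_setT (istar : 'I_k) :
  perm_eq (C_list [set: 'I_k] istar) (full_list istar).
Proof.
apply/seq.permP => P; rewrite C_list_setT /full_list count_cat !count_map count_filter.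
elim: (iota 0 k) => [|t ts IHts] //=; rewrite count_cat IHts.
by case: (t != istar) => /=; lia.
Qed.

End FullSet.

Section Intersection.
Variables (R : realType) (k : nat) (I : {set 'I_k}).
Hypothesis I_neq0 : I != set0.
Variable x : 'I_(2 * k - 1) -> R.
Local Notation i := (itI I).
Local Notation l := #|I|.
Local Notation F := (nb_le (fun c => win_rep k (i 0)%:R (x c))).
Local Notation G := (nb_lt (fun c => win_rep k (i 0)%:R (x c))).

Lemma Xi_inter_counts : (forall j, j \in I -> Xi j x) <->
  (forall u v, (u < l)%N -> (i 0 <= v < i 0 + k)%N ->
     G (i u) + 2 * v + (v < i u) <= F v + 2 * i u)%N.
Proof.
have k_gt0 : (0 < k)%N by have := itI_ltk (_ : 0 < #|I|)%N; rewrite card_gt0 I_neq0; lia.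
split=> [X_x u v lt_u | H j j_in].
  have := X_x _ (itI_mem lt_u); rewrite /Xi /=.
  by move=> /(Xi_counts k_gt0 x (itI_window I_neq0 lt_u)); apply.
have [u lt_u def_j] := itI_surj j_in; rewrite /Xi -def_j.
by apply/(Xi_counts k_gt0 x (itI_window I_neq0 lt_u)) => v; exact: H.
Qed.

Lemma Xi_inter_C : (forall j, j \in I -> Xi j x) <->
  exists2 s, (s < l)%N & symc (box k (C_list I s)) x.
Proof.
apply: (iff_trans Xi_inter_counts); apply: (iff_trans (bounds_argmax _ _ _ _ _)).
- by rewrite card_gt0.
- by move=> u u' /andP [le_uu' lt_u']; apply: itI_leq => //; exact: ltnW.
by split=> [] [s lt_s bounds]; exists s => //; apply/(symc_C_boundsP I_neq0 lt_s).
Qed.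

End Intersection.

Unset Implicit Arguments.

Theorem lemmaL (R : realType) (k : nat) (hk : (1 <= k)%N) :
  (forall (I : {set 'I_k}), I != set0 ->
     forall x : 'I_(2 * k - 1) -> R,
       (forall i : 'I_k, i \in I -> @Xi R k i x) <->
       (exists2 s : nat, (s < #|I|)%N & symc (box k (C_list I s)) x))
  /\
  (forall x : 'I_(2 * k - 1) -> R,
       (forall i : 'I_k, @Xi R k i x) <->
       (exists istar : 'I_k, symc (box k (full_list istar)) x)).
Proof.
split=> [I I_neq0 x | x]; first exact: Xi_inter_C.
have setT_neq0 : [set: 'I_k] != set0 by apply/set0Pn; exists (Ordinal hk).
have size_CT s : (s < k)%N -> size (C_list [set: 'I_k] s) = (2 * k - 1)%N.
  by move=> lt_s; rewrite size_C // cardsT card_ord.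
apply: (@iff_trans _ (forall i, i \in [set: 'I_k] -> Xi i x)).
  by split=> [X_x i _ | X_x i]; [exact: X_x | exact: X_x (in_setT i)].
apply: (iff_trans (Xi_inter_C setT_neq0 x)); rewrite cardsT card_ord.
split=> [[s lt_s C_x] | [istar full_x]].
- exists (Ordinal lt_s); apply: (symc_box_perm (size_CT s lt_s) _ C_x).
  by rewrite perm_sym; exact: (perm_C_list_setT hk (Ordinal lt_s)).
- have perm_istar := perm_C_list_setT hk istar.
  exists (val istar); first exact: ltn_ord.
  apply: (symc_box_perm _ perm_istar full_x).
  by rewrite -(perm_size perm_istar) size_CT.
Qed.
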